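(* Let $D\in(0,1]$ and define $\mathcal F_{\bm B}:=\{r_2\in[\underline x,\bar x]:(\bm R\bm c^m)^\top G_{\bm B}(r_2)\le D\}$, $\mathcal F_{\bm A}:=\{(r_1,r_3,p)\in F:(\bm R\bm c^m)^\top G_{\bm A}(r_1,r_3,p)\le D\}$, $\mathcal F_{\bm B}^{=}:=\{r_2\in[\underline x,\bar x]:(\bm R\bm c^m)^\top G_{\bm B}(r_2)=D\}$ and $\mathcal F_{\bm A}^{=}:=\{(r_1,r_3,p)\in F:(\bm R\bm c^m)^\top G_{\bm A}(r_1,r_3,p)=D\}$. Then $$\max_{r_2\in\mathcal F_{\bm B}}(\bm R\bm v_1^m)^\top G_{\bm B}(r_2)=\max_{r_2\in\mathcal F_{\bm B}^{=}}(\bm R\bm v_1^m)^\top G_{\bm B}(r_2),\qquad \max_{(r_1,r_3,p)\in\mathcal F_{\bm A}}(\bm R\bm v_2^m)^\top G_{\bm A}(r_1,r_3,p)=\max_{(r_1,r_3,p)\in\mathcal F_{\bm A}^{=}}(\bm R\bm v_2^m)^\top G_{\bm A}(r_1,r_3,p).$$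
   Context: Let $N\ge3$ be an integer and $\underline x=x_1<x_2<\cdots<x_N=\bar x$ real numbers; $\bm e$ denotes the all-ones vector of the appropriate dimension. Define $\bm g:[\underline x,\bar x]\to\mathbb R^{N-1}$ by $\bm g(x_1)=\bm 0$ and, for $x\in(x_i,x_{i+1}]$ ($i\in\{1,\dots,N-1\}$), $\bm g(x)=(1,\dots,1,\frac{x-x_i}{x_{i+1}-x_i},0,\dots,0)$ with the first $i-1$ entries equal to $1$, the $i$-th entry $\frac{x-x_i}{x_{i+1}-x_i}$ and the last $N-1-i$ entries $0$. For $\bm v\in\mathbb R^{N-2}$ let $\bm R\bm v:=(v_1,\dots,v_{N-2},1-\bm e^\top\bm v)\in\mathbb R^{N-1}$. Define $G_{\bm A}(r_1,r_3,p):=(1-p)\bm g(r_1)+p\,\bm g(r_3)$, $G_{\bm B}(r_2):=\bm g(r_2)$, and $F:=\{(r_1,r_3,p)\in[\underline x,\bar x]\times[\underline x,\bar x]\times[0,1]: r_1\le r_3\}$. Fix $m\ge1$ and data $(r_1^k,r_3^k,p^k)\in F$, $r_2^k\in[\underline x,\bar x]$, $l_k\in\{-1,1\}$ for $k=1,\dots,m-1$. Let $\mathcal V^{m-1}:=\{\bm v\in\mathbb R^{N-2}: v_i\ge0\ (i=1,\dots,N-2),\ \bm e^\top\bm v\le1,\ l_k(\bm R\bm v)^\top(G_{\bm A}(r_1^k,r_3^k,p^k)-G_{\bm B}(r_2^k))\le0\ (k=1,\dots,m-1)\}$, assumed to have nonempty interior; write its defining inequalities as $\tilde{\bm a}_i^\top\bm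 v\le\tilde b_i$. Let $\bm c^m$ be its analytic center, i.e. the maximizer over the interior of $\mathcal V^{m-1}$ of $\sum_i\log(\tilde b_i-\tilde{\bm a}_i^\top\bm v)$; in particular $c^m_i>0$ for all $i$ and $1-\bm e^\top\bm c^m>0$. Let $\bm H:=\sum_i\tilde{\bm a}_i\tilde{\bm a}_i^\top/(\tilde b_i-\tilde{\bm a}_i^\top\bm c^m)^2$ (Sonnevend's inner ellipsoid is $\{\bm v:(\bm v-\bm c^m)^\top\bm H(\bm v-\bm c^m)\le1\}$), and let $\bm v_1^m,\bm v_2^m\in\mathcal V^{m-1}$ be the two points (in some fixed order) where the line through $\bm c^m$ in the direction of the longest axis of this ellipsoid meets the boundary of $\mathcal V^{m-1}$. *)

From HB Require Import structures.
From mathcomp Require Import all_boot all_order all_algebra.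
From mathcomp Require Import all_classical all_reals all_analysis.
Set Implicit Arguments. Unset Strict Implicit. Unset Printing Implicit Defensive.
Import Order.TTheory GRing.Theory Num.Theory.
Local Open Scope ring_scope.

Section Defs.
Variables (R : realType) (N : nat).
(* grid points: x 0 < x 1 < ... < x (N-1)  (0-based; the paper's x_1,...,x_N);
   values of x at indices >= N are irrelevant *)
Variable x : nat -> R.

Definition xlow : R := x 0.
Definition xup : R := x N.-1.

Definition dotc k (u w : 'cV[R]_k) : R := \sum_i u i 0 * w i 0.

(* (0-based) component j of g(t): it is 0 if t <= x_j, 1 if t >= x_{j+1},
   and (t - x_j)/(x_{j+1} - x_j) in between.  On [x_1, x_N] this is exactly the
   paper's piecewise definition of g. *)
Definition gcomp (t : R) (j : nat) : R :=
  if t <= x j then 0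
  else if x j.+1 <= t then 1
  else (t - x j) / (x j.+1 - x j).

Definition gvec (t : R) : 'cV[R]_(N.-1) := \col_(j < N.-1) gcomp t j.

(* R v = (v_1, ..., v_{N-2}, 1 - e^T v) *)
Definition Rmap (v : 'cV[R]_(N.-2)) : 'cV[R]_(N.-1) :=
  \col_(i < N.-1)
    (if (insub (val i) : option 'I_(N.-2)) is Some j then v j 0
     else 1 - \sum_j v j 0).

Definition GA (r1 r3 p : R) : 'cV[R]_(N.-1) := (1 - p) *: gvec r1 + p *: gvec r3.
Definition GB (r2 : R) : 'cV[R]_(N.-1) := gvec r2.

Definition inF (r1 r3 p : R) : Prop :=
  [/\ xlow <= r1 <= xup, xlow <= r3 <= xup, 0 <= p <= 1 & r1 <= r3].

Variable m : nat.
(* data (r_1^k, r_3^k, p^k), r_2^k, l_k for k = 1..m-1 (0-based index k : 'I_(m-1)) *)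
Variables (r1d r3d pd r2d ld : 'I_(m.-1) -> R).

Definition wk (k : 'I_(m.-1)) : 'cV[R]_(N.-1) :=
  GA (r1d k) (r3d k) (pd k) - GB (r2d k).

Definition inV (v : 'cV[R]_(N.-2)) : Prop :=
  [/\ forall i, 0 <= v i 0,
      \sum_i v i 0 <= 1
    & forall k, ld k * dotc (Rmap v) (wk k) <= 0].

(* The defining inequalities  a_i^T v <= b_i  of V^{m-1}, as pairs (a_i, b_i):
   -v_i <= 0 ;  e^T v <= 1 ;  l_k (R v)^T w_k <= 0 written in affine form using
   (R v)^T w = (R 0)^T w + sum_j v_j ((R e_j)^T w - (R 0)^T w). *)
Definition aK (k : 'I_(m.-1)) : 'cV[R]_(N.-2) :=
  \col_(j < N.-2) (ld k * (dotc (Rmap (delta_mx j 0)) (wk k) - dotc (Rmap 0) (wk k))).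
Definition bK (k : 'I_(m.-1)) : R := - (ld k * dotc (Rmap 0) (wk k)).

Definition constraints : seq ('cV[R]_(N.-2) * R) :=
  [seq (- (delta_mx i 0 : 'cV[R]_(N.-2)), 0) | i <- enum 'I_(N.-2)]
  ++ [:: (const_mx 1, 1)]
  ++ [seq (aK k, bK k) | k <- enum 'I_(m.-1)].

Definition slack (ab : 'cV[R]_(N.-2) * R) (v : 'cV[R]_(N.-2)) : R :=
  ab.2 - dotc ab.1 v.

Definition strictV (v : 'cV[R]_(N.-2)) : Prop :=
  forall ab, ab \in constraints -> 0 < slack ab v.

Definition logbarrier (v : 'cV[R]_(N.-2)) : R :=
  \sum_(ab <- constraints) ln (slack ab v).

Definition analytic_center (c : 'cV[R]_(N.-2)) : Prop :=
  strictV c /\ forall v, strictV v -> logbarrier v <= logbarrier c.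

Definition Hmat (c : 'cV[R]_(N.-2)) : 'M[R]_(N.-2) :=
  \sum_(ab <- constraints) ((slack ab c) ^- 2) *: (ab.1 *m ab.1^T).

Definition in_ellipsoid (c v : 'cV[R]_(N.-2)) : Prop :=
  ((v - c)^T *m Hmat c *m (v - c)) 0 0 <= 1.

(* d (nonzero) is a direction of the longest axis of the ellipsoid: the line through
   the center in direction d contains a point of the ellipsoid at maximal distance
   from the center (an endpoint of the longest axis). *)
Definition longest_axis_dir (c d : 'cV[R]_(N.-2)) : Prop :=
  d != 0 /\
  exists t : R, in_ellipsoid c (c + t *: d) /\
    forall q, in_ellipsoid c q -> dotc (q - c) (q - c) <= dotc (t *: d) (t *: d).

Definition boundaryV (v : 'cV[R]_(N.-2)) : Prop :=
  inV v /\ forall e : R, 0 < e -> exists w, dotc (w - v) (w - v) < e /\ ~ inV w.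

Definition on_line (c d v : 'cV[R]_(N.-2)) : Prop := exists t : R, v = c + t *: d.

Definition is_max (T : Type) (S : T -> Prop) (f : T -> R) (M : R) : Prop :=
  (exists y, S y /\ f y = M) /\ forall y, S y -> f y <= M.

End Defs.

From HB Require Import structures.
From mathcomp Require Import all_boot all_order all_algebra.
From mathcomp Require Import all_classical all_reals all_analysis.
Import Order.TTheory GRing.Theory Num.Theory numFieldNormedType.Exports.
Set Implicit Arguments. Unset Strict Implicit. Unset Printing Implicit Defensive.
Local Open Scope ring_scope.

(* Of v1 and v2 only their membership in V is used: it makes R v1 and R v2
   probability vectors, so that t |-> (R v)^T g(t) is continuous, nondecreasing,
   0 at the left end of the grid and 1 at the right end; (R c)^T g has the same
   end values.  A maximiser of the objective over the compact set where the
   constraint is <= D can therefore be pushed, by the intermediate value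
   theorem, onto the level set {constraint = D} without decreasing the
   objective: for option B by increasing r2, for a lottery (r1, r3, p) by
   increasing r3, or, if even r3 = xup stays below D, by setting r3 = xup and
   increasing r1. *)

Section Maxima.
Variables (R : realType) (T : Type).

Lemma eq_is_max (S S' : T -> Prop) (f f' : T -> R) M :
  (forall y, S y <-> S' y) -> f =1 f' -> is_max S f M -> is_max S' f' M.
Proof.
move=> SS' ff' [[y [/SS' Sy fy]] ymax]; split=> [|z /SS' /ymax]; last by rewrite ff'.
by exists y; rewrite -ff'.
Qed.

Lemma is_max_dominating_subset (S E : T -> Prop) (f : T -> R) M :
  (forall y, E y -> S y) -> (forall y, S y -> exists2 z, E z & f y <= f z) ->
  is_max S f M -> is_max E f M.
Proof.
move=> ES SE [[y [Sy <-]] ymax]; have [z Ez yz] := SE y Sy.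
split=> [|w /ES/ymax //]; exists z; split=> //.
by apply/eqP; rewrite eq_le yz andbT; apply/ymax/ES.
Qed.

End Maxima.

Lemma is_max_compact (R : realType) (T : topologicalType) (K : set T) (f : T -> R) :
  compact K -> (K !=set0)%classic -> continuous f -> exists M, is_max K f M.
Proof.
move=> cK K0 cf.
have [t /set_mem Kt tmax] := compact_EVT_max K0 cK (continuous_subspaceT cf).
by exists (f t); split=> [|s Ks]; [exists t | apply/tmax/mem_set].
Qed.

Lemma closed_sublevel (R : realFieldType) (T : topologicalType) (g : T -> R) D :
  continuous g -> closed [set t | g t <= D]%classic.
Proof. by move=> cg; exact: (preimage_closed (fun t _ => cg t) (@closed_le R D)). Qed.

Lemma level_point_above (R : realType) (h : R -> R) (r b D : R) :
  continuous h -> r <= b -> h r <= D -> D <= h b -> exists2 s, r <= s <= b & h s = D.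
Proof.
move=> ch rb hrD Dhb.
have [|s] := IVT (v := D) rb (continuous_subspaceT ch).
  by rewrite ge_min hrD le_max Dhb orbT.
by rewrite in_itv /= => srb hs; exists s.
Qed.

Definition lottery_mean (R : realType) (g : R -> R) (q : R * R * R) : R :=
  (1 - q.2) * g q.1.1 + q.2 * g q.1.2.

Lemma lottery_mean_continuous (R : realType) (g : R -> R) :
  continuous g -> continuous (lottery_mean g).
Proof.
move=> cg q; have cfst2 : continuous (fun q : R * R * R => q.1.2).
  by move=> ?; apply: continuous_comp; [exact: cvg_fst | exact: cvg_snd].
have cfst1 : continuous (fun q : R * R * R => q.1.1).
  by move=> ?; apply: continuous_comp; exact: cvg_fst.
apply: cvgD; apply: cvgM.
- by apply: cvgB; [exact: cvg_cst | exact: cvg_snd].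
- exact: continuous_comp (cfst1 q) (cg _).
- exact: cvg_snd.
- exact: continuous_comp (cfst2 q) (cg _).
Qed.

Section LevelSets.
Variables (R : realType) (a b D : R) (h f : R -> R).
Hypotheses (ab : a <= b) (ch : continuous h) (cf : continuous f).
Hypotheses (f_nd : {homo f : s t / s <= t}) (haD : h a <= D) (Dhb : D <= h b).

Lemma max_sublevel_at_level :
  exists M, is_max (fun t => a <= t <= b /\ h t <= D) f M /\
            is_max (fun t => a <= t <= b /\ h t = D) f M.
Proof.
have [M Mmax] : exists M, is_max (fun t => a <= t <= b /\ h t <= D) f M.
  apply: is_max_compact => //; last by exists a; rewrite lexx ab.
  have -> : (fun t => a <= t <= b /\ h t <= D) =
            (`[a, b] `&` [set t | h t <= D])%classic.
    by apply/seteqP; split=> t /=; rewrite in_itv.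
  by apply: compact_closedI; [exact: segment_compact | exact: closed_sublevel].
exists M; split=> //; apply: is_max_dominating_subset Mmax => [t [? ->] //|t [/andP[a_t tb] htD]].
have [s /andP[ts sb] hs] := level_point_above ch tb htD Dhb.
by exists s; [rewrite (le_trans a_t ts) sb | exact: f_nd].
Qed.

Definition lottery (q : R * R * R) : Prop :=
  [/\ a <= q.1.1 <= b, a <= q.1.2 <= b, 0 <= q.2 <= 1 & q.1.1 <= q.1.2].

Lemma compact_lottery : compact lottery.
Proof.
have -> : lottery = (`[a, b] `*` `[a, b] `*` `[0, 1]
                     `&` [set q | q.1.1 - q.1.2 <= 0])%classic.
  apply/seteqP; split=> -[[r1 r3] p]; rewrite /lottery /= !in_itv /= subr_le0.
    by case=> *; do !split.
  by case=> -[[? ?] ?] ?; split.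
apply: compact_closedI.
  by apply: compact_setX; [apply: compact_setX|]; exact: segment_compact.
apply: closed_sublevel => q; apply: cvgB.
  by apply: continuous_comp; exact: cvg_fst.
by apply: continuous_comp; [exact: cvg_fst | exact: cvg_snd].
Qed.

Lemma lottery_mean_le r1 r3 s1 s3 p : 0 <= p <= 1 -> r1 <= s1 -> r3 <= s3 ->
  lottery_mean f (r1, r3, p) <= lottery_mean f (s1, s3, p).
Proof.
move=> /andP[p0 p1] rs1 rs3; rewrite /lottery_mean /=.
by rewrite lerD // ler_wpM2l ?subr_ge0 ?f_nd.
Qed.

Lemma lottery_level_point_above q : lottery q -> lottery_mean h q <= D ->
  exists2 q', lottery q' /\ lottery_mean h q' = D &
              lottery_mean f q <= lottery_mean f q'.
Proof.
case: q => -[r1 r3] p [/andP[ar1 r1b] /andP[ar3 r3b] p01 r13].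
rewrite /lottery_mean /= => hqD.
have [Dlo|loD] := leP D ((1 - p) * h r1 + p * h b).
- have [|s /andP[r3s sb] hs] := level_point_above (h := fun t => (1 - p) * h r1 + p * h t)
    _ r3b hqD Dlo.
    move=> t; apply: cvgD; first exact: cvg_cst.
    by apply: cvgM; [exact: cvg_cst | exact: ch].
  exists (r1, s, p); last exact: lottery_mean_le.
  by split=> //; split;
    rewrite /= ?ar1 ?r1b ?sb ?p01 ?(le_trans ar3 r3s) ?(le_trans r13 r3s).
- have hbD : D <= (1 - p) * h b + p * h b by rewrite -mulrDl subrK mul1r.
  have [|s /andP[r1s sb] hs] := level_point_above (h := fun t => (1 - p) * h t + p * h b)
    _ r1b (ltW loD) hbD.
    move=> t; apply: cvgD; last exact: cvg_cst.
    by apply: cvgM; [exact: cvg_cst | exact: ch].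
  exists (s, b, p); last exact: lottery_mean_le.
  by split=> //; split; rewrite /= ?lexx ?ab ?sb ?p01 ?(le_trans ar1 r1s).
Qed.

Lemma max_lottery_sublevel_at_level :
  exists M, is_max (fun q => lottery q /\ lottery_mean h q <= D) (lottery_mean f) M /\
            is_max (fun q => lottery q /\ lottery_mean h q = D) (lottery_mean f) M.
Proof.
have [M Mmax] :
    exists M, is_max (fun q => lottery q /\ lottery_mean h q <= D) (lottery_mean f) M.
  apply: is_max_compact; last exact: lottery_mean_continuous.
  - apply: compact_closedI compact_lottery _.
    exact: closed_sublevel (lottery_mean_continuous ch).
  - exists (a, a, 0); rewrite /lottery /lottery_mean /= subr0 mul1r mul0r addr0.
    by split=> //; split; rewrite ?lexx ?ab ?ler01.
exists M; split=> //; apply: is_max_dominating_subset Mmax => [q [? ->] //|q [Lq hqD]].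
have [q' [Lq' hq'] fqq'] := lottery_level_point_above Lq hqD.
by exists q'.
Qed.

End LevelSets.

Section PiecewiseLinearUtility.
Variables (R : realType) (N : nat) (x : nat -> R).
Hypothesis x_step : forall i, (i.+1 < N)%N -> x i < x i.+1.

Definition pwl_utility (u : 'cV[R]_(N.-1)) (t : R) : R := dotc u (gvec N x t).

Lemma x_le i j : (i <= j)%N -> (j < N)%N -> x i <= x j.
Proof.
move=> ij jN; elim: j ij jN => [|j IH]; first by rewrite leqn0 => /eqP ->.
rewrite leq_eqVlt => /orP[/eqP -> //|ij] jN.
exact: le_trans (IH ij (ltnW jN)) (ltW (x_step jN)).
Qed.

Lemma gcomp_clamp t j : (j.+1 < N)%N ->
  gcomp x t j = Num.min 1 (Num.max 0 ((t - x j) / (x j.+1 - x j))).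
Proof.
move=> jN; have dx : 0 < x j.+1 - x j by rewrite subr_gt0 x_step.
rewrite /gcomp; case: ifPn => [tj|]; last rewrite -ltNge => jt.
  have : (t - x j) / (x j.+1 - x j) <= 0 by rewrite pmulr_lle0 ?invr_gt0 // subr_le0.
  by move=> /max_idPl ->; rewrite (min_idPr ler01).
case: ifPn => [jt'|]; last rewrite -ltNge => tj'.
  have ge1 : 1 <= (t - x j) / (x j.+1 - x j) by rewrite ler_pdivlMr // mul1r lerB.
  by rewrite (max_idPr (le_trans ler01 ge1)) (min_idPl ge1).
have ge0 : 0 <= (t - x j) / (x j.+1 - x j).
  by rewrite divr_ge0 ?(ltW dx) // subr_ge0 (ltW jt).
have le1 : (t - x j) / (x j.+1 - x j) <= 1 by rewrite ler_pdivrMr // mul1r lerB // ltW.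
by rewrite (max_idPr ge0) (min_idPr le1).
Qed.

Lemma gcomp_continuous j : (j.+1 < N)%N -> continuous (gcomp x ^~ j).
Proof.
move=> jN t; rewrite (_ : gcomp x ^~ j = cst 1 \min (cst 0 \max
                                 (fun t => (t - x j) * (x j.+1 - x j)^-1))).
  apply: continuous_min; first exact: cvg_cst.
  apply: continuous_max; first exact: cvg_cst.
  by apply: cvgM; [apply: cvgB; [exact: cvg_id | exact: cvg_cst] | exact: cvg_cst].
by apply: funext => s; rewrite gcomp_clamp.
Qed.

Lemma gcomp_nondecreasing j : (j.+1 < N)%N -> {homo gcomp x ^~ j : s t / s <= t}.
Proof.
move=> jN s t st; rewrite !gcomp_clamp //; apply: le_min2 => //; apply: le_max2 => //.
by rewrite ler_pM2r ?invr_gt0 ?subr_gt0 ?x_step // lerB.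
Qed.

Lemma ord_pred_lt (i : 'I_(N.-1)) : (i.+1 < N)%N.
Proof. by case: i => i /=; case: N => //= n; rewrite ltnS. Qed.

Lemma pwl_utility_continuous (u : 'cV[R]_(N.-1)) : continuous (pwl_utility u).
Proof.
rewrite /pwl_utility /dotc; apply: continuous_big => [|i _]; first exact: add_continuous.
rewrite (_ : (fun t => _) = fun t => u i 0 * gcomp x t i); last first.
  by apply: funext => s; rewrite mxE.
by move=> t; apply: cvgM; [exact: cvg_cst | exact: gcomp_continuous (ord_pred_lt i) t].
Qed.

Lemma pwl_utility_nondecreasing (u : 'cV[R]_(N.-1)) : (forall i, 0 <= u i 0) ->
  {homo pwl_utility u : s t / s <= t}.
Proof.
move=> u_ge0 s t st; apply: ler_sum => i _; rewrite !mxE.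
by rewrite ler_wpM2l // (gcomp_nondecreasing (ord_pred_lt i) st).
Qed.

Lemma pwl_utility_xlow (u : 'cV[R]_(N.-1)) : pwl_utility u (xlow x) = 0.
Proof.
rewrite /pwl_utility /dotc big1 // => i _; rewrite !mxE /gcomp.
by rewrite x_le ?mulr0 // ltnW // ord_pred_lt.
Qed.

Lemma pwl_utility_xup (u : 'cV[R]_(N.-1)) : pwl_utility u (xup N x) = \sum_i u i 0.
Proof.
rewrite /pwl_utility /dotc; apply: eq_bigr => i _; rewrite !mxE /gcomp.
have iN := ord_pred_lt i; have xi_up : x i.+1 <= xup N x.
  apply: x_le; first by rewrite ltn_predRL.
  by rewrite ltn_predL (leq_ltn_trans (leq0n _) iN).
by rewrite (lt_geF (lt_le_trans (x_step iN) xi_up)) xi_up mulr1.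
Qed.

Lemma dotc_GA (u : 'cV[R]_(N.-1)) (q : R * R * R) :
  dotc u (GA N x q.1.1 q.1.2 q.2) = lottery_mean (pwl_utility u) q.
Proof.
rewrite /dotc /GA /lottery_mean /pwl_utility /dotc !mulr_sumr -big_split.
by apply: eq_bigr => i _; rewrite !mxE mulrDr !mulrA ![u i 0 * _]mulrC.
Qed.

End PiecewiseLinearUtility.

Lemma sum_Rmap (R : realType) N (v : 'cV[R]_(N.-2)) : (2 <= N)%N ->
  \sum_(i < N.-1) Rmap v i 0 = 1.
Proof.
case: N v => [|[|n]] v //= _; rewrite big_ord_recr /= !mxE.
case: insubP => [j|_]; first by rewrite /= ltnn.
rewrite (eq_bigr (fun j => v j 0)) => [|i _]; first by rewrite addrC subrK.
rewrite !mxE; case: insubP => [j _ ij|]; last by rewrite /= ltn_ord.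
by congr (v _ 0); apply: val_inj.
Qed.

Lemma Rmap_ge0 (R : realType) N (v : 'cV[R]_(N.-2)) :
  (forall i, 0 <= v i 0) -> \sum_i v i 0 <= 1 -> forall i, 0 <= Rmap v i 0.
Proof.
move=> v_ge0 v_le1 i; rewrite mxE; case: insubP => [j _ _|_]; first exact: v_ge0.
by rewrite subr_ge0.
Qed.

Theorem proposition5 (R : realType) (N : nat) (x : nat -> R) (m : nat)
  (r1d r3d pd r2d ld : 'I_(m.-1) -> R) (c d v1 v2 : 'cV[R]_(N.-2)) (D : R) :
  (3 <= N)%N ->
  (forall i, (i.+1 < N)%N -> x i < x i.+1) ->
  (1 <= m)%N ->
  (forall k, inF N x (r1d k) (r3d k) (pd k)) ->
  (forall k, xlow x <= r2d k <= xup N x) ->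
  (forall k, ld k = 1 \/ ld k = -1) ->
  analytic_center x r1d r3d pd r2d ld c ->
  longest_axis_dir x r1d r3d pd r2d ld c d ->
  boundaryV x r1d r3d pd r2d ld v1 -> on_line c d v1 ->
  boundaryV x r1d r3d pd r2d ld v2 -> on_line c d v2 ->
  v1 != v2 ->
  0 < D <= 1 ->
  (exists M, is_max (fun r2 => xlow x <= r2 <= xup N x /\
                               dotc (Rmap c) (GB N x r2) <= D)
                    (fun r2 => dotc (Rmap v1) (GB N x r2)) M /\
             is_max (fun r2 => xlow x <= r2 <= xup N x /\
                               dotc (Rmap c) (GB N x r2) = D)
                    (fun r2 => dotc (Rmap v1) (GB N x r2)) M) /\
  (exists M, is_max (fun q : R * R * R => inF N x q.1.1 q.1.2 q.2 /\
                               dotc (Rmap c) (GA N x q.1.1 q.1.2 q.2) <= D)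
                    (fun q => dotc (Rmap v2) (GA N x q.1.1 q.1.2 q.2)) M /\
             is_max (fun q : R * R * R => inF N x q.1.1 q.1.2 q.2 /\
                               dotc (Rmap c) (GA N x q.1.1 q.1.2 q.2) = D)
                    (fun q => dotc (Rmap v2) (GA N x q.1.1 q.1.2 q.2)) M).
Proof.
move=> N3 x_step _ _ _ _ _ _ [[v1_ge0 v1_le1 _] _] _ [[v2_ge0 v2_le1 _] _] _ _.
move=> /andP[D_gt0 D_le1]; have N2 := ltnW N3.
have ab : xlow x <= xup N x by apply: (x_le x_step); rewrite // ltn_predL (ltnW N2).
have lowD (u : 'cV[R]_(N.-1)) : pwl_utility x u (xlow x) <= D.
  by rewrite (pwl_utility_xlow x_step) ltW.
have Dup (v : 'cV[R]_(N.-2)) : D <= pwl_utility x (Rmap v) (xup N x).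
  by rewrite (pwl_utility_xup x_step) sum_Rmap.
have utility_nd (v : 'cV[R]_(N.-2)) : (forall i, 0 <= v i 0) -> \sum_i v i 0 <= 1 ->
    {homo pwl_utility x (Rmap v) : s t / s <= t}.
  by move=> v_ge0 v_le1; apply/(pwl_utility_nondecreasing x_step)/Rmap_ge0.
have c_cont := pwl_utility_continuous x_step (u := Rmap c).
split.
  exact: max_sublevel_at_level ab c_cont (pwl_utility_continuous x_step (u := Rmap v1))
    (utility_nd _ v1_ge0 v1_le1) (lowD _) (Dup c).
have [M [Mle Meq]] := max_lottery_sublevel_at_level ab c_cont
  (pwl_utility_continuous x_step (u := Rmap v2)) (utility_nd _ v2_ge0 v2_le1)
  (lowD _) (Dup c).
by exists M; split; [apply: eq_is_max Mle | apply: eq_is_max Meq] => q;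
  rewrite dotc_GA.
Qed.
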